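(* Consider $N\ge3$ cells on a ring, with interconnection matrix $M\in\mathbb{R}^{N\times N}$ the circulant matrix with $[M]_{i,i\pm1 \bmod N}=\tfrac12$ and all other entries $0$, so that its eigenvalues are $\lambda_k(M)=\cos\frac{2\pi k}{N}\in[-1,1]$, $k=0,\dots,N-1$. The mutual inactivation Notch–Delta model is $$\dot N_i=\beta_N-\gamma N_i-\frac{N_iv_{D_i}}{k_t}-\frac{N_iD_i}{k_c},\quad \dot D_i=\bar\beta_D+u_i-\gamma D_i-\frac{D_iv_{N_i}}{k_t}-\frac{N_iD_i}{k_c},\quad \dot R_i=\beta_R\frac{(N_iv_{D_i})^n}{k_{RS}+(N_iv_{D_i})^n}-\gamma_RR_i,$$ with $(v_{N_i},v_{D_i})$ the $i$th block of $(M\otimes I_2)w$, $w_i=(N_i,D_i)$, and all parameters $\beta_N,\bar\beta_D,\gamma,\gamma_R,k_t,k_c,\beta_R,k_{RS},n$ positive. Let $(\bar N^*,\bar D^*,\bar R^* )$ with $\bar N^*,\bar D^*>0$ be a spatially homogeneous steady state for $u\equiv0$ (so $\bar v_N^*=\bar N^*$, $\bar v_D^*=\bar D^*$), and define $$A=\begin{pmatrix}-\gamma-\frac{\bar v_D^*}{k_t}-\frac{\bar D^*}{k_c}&-\frac{\bar N^*}{k_c}&0\\-\frac{\bar D^*}{k_c}&-\gamma-\frac{\bar v_N^*}{k_t}-\frac{\bar N^*}{k_c}&0\\ b_1&0&-\gamma_R\end{pmatrix},\quad B_v=\begin{pmatrix}0&-\frac{\bar N^*}{k_t}\\-\frac{\bar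 D^*}{k_t}&0\\0&b_2\end{pmatrix},\quad G=\begin{pmatrix}1&0&0\\0&1&0\end{pmatrix},$$ where $b_1=\beta_Rnk_{RS}\frac{(\bar v_D^* )^n(\bar N^* )^{n-1}}{(k_{RS}+(\bar N^*\bar v_D^* )^n)^2}$ and $b_2=\frac{\bar N^*}{\bar v_D^*}b_1$. Then for every $k=0,\dots,N-1$, all eigenvalues of $A+\lambda_k(M)B_vG$ have negative real part; i.e. the linearization about the homogeneous steady state is asymptotically stable.
   Context: $\otimes$ denotes the Kronecker product. $N_i,D_i,R_i$ are concentrations of Notch, Delta and a reporter in cell $i$; $v_{N_i},v_{D_i}$ are the average Notch and Delta of the two neighbors of cell $i$. *)

From mathcomp Require Import all_boot all_order all_algebra.
From mathcomp Require Import all_classical all_reals.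
From mathcomp Require Import exp trigo.
From mathcomp Require Import complex.
Set Implicit Arguments. Unset Strict Implicit. Unset Printing Implicit Defensive.
Import Order.TTheory GRing.Theory Num.Theory.
Local Open Scope ring_scope.

Section Defs.
Variable R : realType.

Definition mx33 (a11 a12 a13 a21 a22 a23 a31 a32 a33 : R) : 'M[R]_3 :=
  \matrix_(i < 3, j < 3)
    nth 0 (nth [::] [:: [:: a11; a12; a13]; [:: a21; a22; a23]; [:: a31; a32; a33]] i) j.
Definition mx32 (a11 a12 a21 a22 a31 a32 : R) : 'M[R]_(3, 2) :=
  \matrix_(i < 3, j < 2)
    nth 0 (nth [::] [:: [:: a11; a12]; [:: a21; a22]; [:: a31; a32]] i) j.
Definition mx23 (a11 a12 a13 a21 a22 a23 : R) : 'M[R]_(2, 3) :=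
  \matrix_(i < 2, j < 3)
    nth 0 (nth [::] [:: [:: a11; a12; a13]; [:: a21; a22; a23]] i) j.

(* k-th eigenvalue of the ring matrix M ([M]_{i,i+-1 mod N} = 1/2): cos(2 pi k / N) *)
Definition lambdaM (N k : nat) : R := cos (2 * pi * k%:R / N%:R).

Definition hill (betaR kRS n x : R) : R := betaR * powR x n / (kRS + powR x n).

(* linearization data at the homogeneous steady state : vN = Ns, vD = Ds *)
Definition b1 (betaR kRS n Ns Ds : R) : R :=
  betaR * n * kRS * (powR Ds n * powR Ns (n - 1)) / (kRS + powR (Ns * Ds) n) ^+ 2.
Definition b2 (betaR kRS n Ns Ds : R) : R := Ns / Ds * b1 betaR kRS n Ns Ds.

Definition Amat (gam gamR kt kc betaR kRS n Ns Ds : R) : 'M[R]_3 :=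
  mx33 (- gam - Ds / kt - Ds / kc) (- (Ns / kc)) 0
       (- (Ds / kc)) (- gam - Ns / kt - Ns / kc) 0
       (b1 betaR kRS n Ns Ds) 0 (- gamR).
Definition Bv (kt betaR kRS n Ns Ds : R) : 'M[R]_(3, 2) :=
  mx32 0 (- (Ns / kt))
       (- (Ds / kt)) 0
       0 (b2 betaR kRS n Ns Ds).
Definition Gmat : 'M[R]_(2, 3) := mx23 1 0 0 0 1 0.

Definition complex_eigenvalue (m : nat) (A : 'M[R]_m) (z : R[i]) : Prop :=
  eigenvalue (map_mx (fun x : R => (x%:C)%C) A) z.
End Defs.

From mathcomp Require Import all_boot all_order all_algebra.
From mathcomp Require Import all_classical all_reals.
From mathcomp Require Import exp trigo.
From mathcomp Require Import complex.
From mathcomp Require Import ring lra.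
Set Implicit Arguments. Unset Strict Implicit. Unset Printing Implicit Defensive.
Import Order.TTheory GRing.Theory Num.Theory.
Local Open Scope ring_scope.

(* The reporter does not feed back into (N, D), so the linearization is block
   lower triangular: its spectrum is {-gamma_R} together with the spectrum of
   the 2x2 Notch-Delta block.  With u = D*/k_t, w = D*/k_c, u' = N*/k_t,
   w' = N*/k_c and l = lambda_k(M), that block has negative trace and
   determinant g^2 + g (u + w + u' + w') + u u' (1 - l^2) + (1 - l)(u w' + w u'),
   which is positive because |l| <= 1.  A real quadratic with negative trace and
   positive determinant has both roots in the open left half-plane.  Neither the
   steady-state equations nor the values of b_1, b_2 (nor N >= 3) are needed. *)

Lemma Re_lt0_of_quadratic (R : rcfType) (t d : R) (z : R[i]) :
  t < 0 -> 0 < d -> z ^+ 2 - (t%:C)%C * z + (d%:C)%C = 0 -> complex.Re z < 0.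
Proof.
case: z => x y /= ht hd; rewrite expr2; simpc; case=> eRe eIm.
rewrite ltNge; apply/negP => hx.
have y0 : y = 0.
  have : y * (2 * x - t) = 0 by rewrite -eIm; ring.
  by move/eqP; rewrite mulf_eq0 => /orP[/eqP //|]; lra.
by subst y; nra.
Qed.

Lemma eigenvector_mx2_char (F : fieldType) (a b c d z v0 v1 : F) :
  v0 * a + v1 * c = z * v0 -> v0 * b + v1 * d = z * v1 -> (v0 != 0) || (v1 != 0) ->
  (z - a) * (z - d) = b * c.
Proof.
move=> e0 e1 nz; apply/eqP; rewrite -subr_eq0; apply/eqP.
set D := (z - a) * (z - d) - b * c.
have vD0 : v0 * D = 0 /\ v1 * D = 0.
  split.
  - have -> : v0 * D = (z - d) * (z * v0 - (v0 * a + v1 * c))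
                         + c * (z * v1 - (v0 * b + v1 * d)) by rewrite /D; ring.
    by rewrite e0 e1 !subrr !mulr0 addr0.
  - have -> : v1 * D = (z - a) * (z * v1 - (v0 * b + v1 * d))
                         + b * (z * v0 - (v0 * a + v1 * c)) by rewrite /D; ring.
    by rewrite e0 e1 !subrr !mulr0 addr0.
case: vD0 => /eqP h0 /eqP h1; move: h0 h1 nz.
by rewrite !mulf_eq0 => /orP[/eqP->|/eqP//] /orP[/eqP->|/eqP//]; rewrite eqxx.
Qed.

Lemma eigenvalue_block_lower3 (F : fieldType) (M : 'M[F]_3) (z : F) :
  M 0 2 = 0 -> M 1 2 = 0 -> eigenvalue M z ->
  z = M 2 2 \/ (z - M 0 0) * (z - M 1 1) = M 0 1 * M 1 0.
Proof.
move=> M02 M12 /eigenvalueP[v /rowP Hv vnz].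
have row3 (j : 'I_3) : v 0 0 * M 0 j + v 0 1 * M 1 j + v 0 2 * M 2 j = z * v 0 j.
  move: (Hv j); rewrite !mxE !big_ord_recr big_ord0 /= add0r => <-.
  by congr (_ + _ + _); congr (v 0 _ * M _ j); apply/val_inj.
have := row3 2; rewrite M02 M12 !mulr0 !add0r mulrC => eq2.
have [v2_0|v2_nz] := eqVneq (v 0 2) 0; last by left; apply: (mulIf v2_nz).
right; apply: (@eigenvector_mx2_char _ _ _ _ _ _ (v 0 0) (v 0 1)).
- by have := row3 0; rewrite v2_0 mul0r addr0.
- by have := row3 1; rewrite v2_0 mul0r addr0.
apply: contraNT vnz; rewrite negb_or !negbK => /andP[/eqP v0 /eqP v1].
apply/eqP/rowP => j; rewrite mxE.
by case: j => [[|[|[|//]]] hj]; [rewrite -v0 | rewrite -v1 | rewrite -v2_0];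
  congr (v 0 _); apply/val_inj.
Qed.

Lemma Re_eigenvalue_lt0_block_lower3 (R : rcfType) (A : 'M[R]_3) (z : R[i]) :
  A 0 2 = 0 -> A 1 2 = 0 -> A 2 2 < 0 ->
  A 0 0 + A 1 1 < 0 -> 0 < A 0 0 * A 1 1 - A 0 1 * A 1 0 ->
  eigenvalue (map_mx (fun x : R => (x%:C)%C) A) z -> complex.Re z < 0.
Proof.
move=> A02 A12 A22 tr_lt0 det_gt0 /eigenvalue_block_lower3[]; rewrite ?mxE ?A02 ?A12 //.
  by move=> ->.
move=> char2; apply: (Re_lt0_of_quadratic tr_lt0 det_gt0).
rewrite !(rmorphD, rmorphN, rmorphM) /=.
have -> : forall a b c d : R[i], z ^+ 2 - (a + d) * z + (a * d - b * c)
                                 = (z - a) * (z - d) - b * c by move=> *; ring.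
by rewrite char2 subrr.
Qed.

Lemma coupled_block_det_gt0 (R : realFieldType) (g u w u' w' l : R) :
  0 < g -> 0 <= u -> 0 <= w -> 0 <= u' -> 0 <= w' -> -1 <= l <= 1 ->
  0 < (- g - u - w) * (- g - u' - w') - (- w' - l * u') * (- w - l * u).
Proof.
move=> g_gt0 u_ge0 w_ge0 u'_ge0 w'_ge0 /andP[lN1 l1].
have -> : (- g - u - w) * (- g - u' - w') - (- w' - l * u') * (- w - l * u)
  = g * g + g * (u + w + u' + w') + u * u' * (1 - l * l) + (1 - l) * (u * w' + w * u').
  by ring.
have ? : 0 <= u * u' * (1 - l * l) by apply: mulr_ge0; [apply: mulr_ge0 | nra].
have ? : 0 <= (1 - l) * (u * w' + w * u').
  by apply: mulr_ge0; [lra | apply: addr_ge0; apply: mulr_ge0].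
have ? : 0 < g * g by apply: mulr_gt0.
have ? : 0 <= g * (u + w + u' + w') by apply: mulr_ge0; lra.
lra.
Qed.

Lemma linearization_mx (R : realType) (gam gamR kt kc betaR kRS n Ns Ds l : R) :
  Amat gam gamR kt kc betaR kRS n Ns Ds + l *: (Bv kt betaR kRS n Ns Ds *m Gmat R)
  = mx33 (- gam - Ds / kt - Ds / kc) (- (Ns / kc) - l * (Ns / kt)) 0
         (- (Ds / kc) - l * (Ds / kt)) (- gam - Ns / kt - Ns / kc) 0
         (b1 betaR kRS n Ns Ds) (l * b2 betaR kRS n Ns Ds) (- gamR).
Proof.
apply/matrixP => i j; rewrite !mxE !big_ord_recr big_ord0 /= !mxE /=.
by case: i j => [[|[|[|//]]] ?] [[|[|[|//]]] ?] /=; ring.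
Qed.

Theorem mainTheorem5 (R : realType) (N : nat) (hN : (3 <= N)%N)
  (betaN betaD gam gamR kt kc betaR kRS n : R)
  (hbN : 0 < betaN) (hbD : 0 < betaD) (hg : 0 < gam) (hgR : 0 < gamR)
  (hkt : 0 < kt) (hkc : 0 < kc) (hbR : 0 < betaR) (hkRS : 0 < kRS) (hn : 0 < n)
  (Ns Ds Rs : R) (hNs : 0 < Ns) (hDs : 0 < Ds)
  (eqN : betaN - gam * Ns - Ns * Ds / kt - Ns * Ds / kc = 0)
  (eqD : betaD - gam * Ds - Ds * Ns / kt - Ns * Ds / kc = 0)
  (eqR : hill betaR kRS n (Ns * Ds) - gamR * Rs = 0) :
  forall k : 'I_N, forall z : R[i],
    complex_eigenvalue
      (Amat gam gamR kt kc betaR kRS n Ns Ds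
        + lambdaM R N k *: (Bv kt betaR kRS n Ns Ds *m Gmat R)) z ->
    complex.Re z < 0.
Proof.
move=> k z.
have l_bounds : -1 <= lambdaM R N k <= 1 by rewrite cos_geN1 cos_le1.
have Ds_kt : 0 < Ds / kt by apply: divr_gt0.
have Ds_kc : 0 < Ds / kc by apply: divr_gt0.
have Ns_kt : 0 < Ns / kt by apply: divr_gt0.
have Ns_kc : 0 < Ns / kc by apply: divr_gt0.
rewrite /complex_eigenvalue linearization_mx.
apply: Re_eigenvalue_lt0_block_lower3; rewrite ?mxE //=.
- by rewrite oppr_lt0.
- lra.
- apply: (coupled_block_det_gt0 (u := Ds / kt) (w := Ds / kc) (u' := Ns / kt) (w' := Ns / kc)) => //.
  all: exact: ltW.
Qed.
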